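(* For the graph $G$ defined below and for every finite set $C$, there is no distinguishing $C$-colouring of the vertex set of $G$.
   Context: Let $\mathbb Q^+=\{q^+: q\in\mathbb Q\}$ and $\mathbb Q^-=\{q^-: q\in\mathbb Q\}$ be two disjoint copies of $\mathbb Q$. $G$ is the simple undirected graph with vertex set $V=\mathbb Q^+\cup\mathbb Q^-$ in which the edges are exactly the pairs $\{q^+,r^-\}$ with $q,r\in\mathbb Q$ and $q<r$ (there are no edges inside $\mathbb Q^+$ or inside $\mathbb Q^-$). A $C$-colouring of $V$ is a map $c\colon V\to C$; it is distinguishing if the only automorphism $\varphi$ of $G$ with $c(\varphi(v))=c(v)$ for all $v\in V$ is the identity. *)

From HB Require Import structures.
From mathcomp Require Import all_boot all_order all_algebra.
Set Implicit Arguments. Unset Strict Implicit. Unset Printing Implicit Defensive.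
Import Order.TTheory GRing.Theory Num.Theory.
Local Open Scope ring_scope.

(* Vertex set V = Q^+ (inl q = q^+) disjoint union Q^- (inr q = q^-). *)
Definition vtx : Type := (rat + rat)%type.
Definition plus (q : rat) : vtx := inl q.
Definition minus (q : rat) : vtx := inr q.

Definition adjG (u v : vtx) : bool :=
  match u, v with
  | inl q, inr r => q < r
  | inr r, inl q => q < r
  | _, _ => false
  end.

Definition is_autG (phi : vtx -> vtx) : Prop :=
  bijective phi /\ forall u v : vtx, adjG (phi u) (phi v) = adjG u v.

Definition distinguishing (C : Type) (c : vtx -> C) : Prop :=
  forall phi : vtx -> vtx,
    is_autG phi -> (forall v, c (phi v) = c v) -> forall v, phi v = v.

(* Colour each rational q by the pair of colours of q^+ and q^-.  With finitely
   many colours there is an interval ]a, b[ in which every colour that occurs is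
   dense (shrink the interval once for each colour that is not dense).  A
   back-and-forth argument, enumerating the rationals, then produces a
   colour-preserving order automorphism of ]a, b[ moving a point x0 to a point
   y0 > x0 of the same colour; extended by the identity outside ]a, b[, it is a
   colour-preserving order automorphism of Q, and acting on both copies of Q it
   is a nontrivial colour-preserving automorphism of G. *)

From mathcomp Require Import all_boot all_order all_algebra.
From mathcomp Require Import lra.
From Stdlib Require Import ClassicalEpsilon Classical.
Set Implicit Arguments. Unset Strict Implicit. Unset Printing Implicit Defensive.
Import Order.TTheory GRing.Theory Num.Theory.
Local Open Scope order_scope.

Lemma seq_max_mem (d : Order.disp_t) (T : orderType d) (x : T) (s : seq T) :
  exists2 m, m \in x :: s & {in x :: s, forall y, y <= m}.
Proof.
elim: s => [|y s [m ms mmax]]; first by exists x => [|z]; rewrite mem_seq1 // => /eqP ->.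
have [my|ym] := leP m y.
- exists y => [|z]; first by rewrite !inE eqxx orbT.
  rewrite !inE => /or3P[/eqP ->|/eqP -> //|zs].
    exact: le_trans (mmax x (mem_head _ _)) my.
  by apply: le_trans (mmax z _) my; rewrite inE zs orbT.
- exists m => [|z]; first by move: ms; rewrite !inE => /orP[->|->]; rewrite ?orbT.
  rewrite !inE => /or3P[/eqP ->|/eqP ->|zs]; first exact: mmax (mem_head _ _).
    exact: ltW.
  by apply: mmax; rewrite inE zs orbT.
Qed.

Lemma seq_min_mem (d : Order.disp_t) (T : orderType d) (x : T) (s : seq T) :
  exists2 m, m \in x :: s & {in x :: s, forall y, m <= y}.
Proof. by have [m ms mmin] := @seq_max_mem _ T^d x s; exists m. Qed.

Lemma eq_of_lt_agree (d : Order.disp_t) (T : orderType d) (x x' y y' : T) :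
  (x < x') = (y < y') -> (x' < x) = (y' < y) -> (x == x') = (y == y').
Proof. by move=> e e'; rewrite !eq_le !leNgt e e'. Qed.

Local Open Scope ring_scope.

Definition dense_in (K : Type) (chi : rat -> K) (k : K) (a b : rat) : Prop :=
  forall x y, a <= x -> x < y -> y <= b -> exists2 z, x < z < y & chi z = k.

Definition homogeneous (K : Type) (chi : rat -> K) (a b : rat) : Prop :=
  a < b /\ forall z, a < z < b -> dense_in chi (chi z) a b.

Lemma dense_in_sub (K : Type) (chi : rat -> K) k a b a' b' :
  a <= a' -> b' <= b -> dense_in chi k a b -> dense_in chi k a' b'.
Proof. by move=> aa' b'b D x y a'x xy yb'; apply: D => //; lra. Qed.

Lemma not_dense_gap (K : Type) (chi : rat -> K) k a b : ~ dense_in chi k a b ->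
  exists x y, [/\ a <= x, x < y, y <= b & forall z, x < z < y -> chi z <> k].
Proof.
move=> nD; apply: NNPP => nG; apply: nD => x y ax xy yb; apply: NNPP => nz.
by apply: nG; exists x, y; split=> // z zxy ez; apply: nz; exists z.
Qed.

Lemma refine_interval (K : eqType) (chi : rat -> K) (s : seq K) a b : a < b ->
  exists x y, [/\ a <= x, x < y, y <= b & forall k, k \in s ->
    (forall z, x < z < y -> chi z <> k) \/ dense_in chi k x y].
Proof.
move=> ab; elim: s => [|k s [x [y [ax xy yb Hs]]]].
  by exists a, b; split.
have [Dk|nDk] := classic (dense_in chi k x y).
  exists x, y; split=> // k'; rewrite inE => /predU1P[-> |/Hs //]; by right.
have [x' [y' [xx' x'y' y'y Gk]]] := not_dense_gap nDk.
exists x', y'; split; [lra | done | lra |] => k'.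
rewrite inE => /predU1P[-> |/Hs]; first by left.
case=> [A|D]; [left => z /andP[x'z zy']; apply: A; lra | right].
exact: dense_in_sub D.
Qed.

Lemma exists_homogeneous (K : finType) (chi : rat -> K) : exists a b, homogeneous chi a b.
Proof.
have [a [b [_ ab _ H]]] := refine_interval chi (enum K) (ltr01 : 0 < 1 :> rat).
exists a, b; split=> // z zab.
by case: (H (chi z) (mem_enum _ _)) => // /(_ z zab).
Qed.

Definition colour_aut (K : Type) (chi : rat -> K) (f : rat -> rat) : Prop :=
  [/\ {mono f : q r / q < r}, forall y, exists q, f q = y & forall q, chi (f q) = chi q].

Section BackAndForth.
Variables (K : eqType) (chi : rat -> K) (a b : rat).
Hypothesis hom : homogeneous chi a b.

(* [L] is the graph of a finite partial map of ]a, b[ that preserves colours and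
   the strict order (hence is injective and functional, see [eq_of_lt_agree]). *)
Definition partial_iso (L : seq (rat * rat)) : Prop :=
  {in L, forall u, [/\ a < u.1 < b, a < u.2 < b & chi u.1 = chi u.2]} /\
  {in L &, forall u v, (u.1 < v.1) = (u.2 < v.2)}.

Lemma partial_iso_swap L : partial_iso L -> partial_iso (map swap_pair L).
Proof.
have mem_swap u : (u \in map swap_pair L) = (swap_pair u \in L).
  by rewrite -{1}(swap_pairK u) (mem_map (can_inj swap_pairK)).
case=> inL monoL; split=> [u|u v]; rewrite !mem_swap.
  by case/inL.
by move=> /monoL mu /mu.
Qed.

Lemma partial_iso_gap L x : partial_iso L -> a < x < b ->
  exists l h, [/\ a <= l, l < h, h <= b &
    {in L, forall v, (v.1 < x -> v.2 <= l) /\ (x < v.1 -> h <= v.2)}].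
Proof.
move=> [inL monoL] xab.
set lo := [seq u.2 | u <- L & u.1 < x]; set hi := [seq u.2 | u <- L & x < u.1].
have [l l_in l_max] := seq_max_mem a lo.
have [h h_in h_min] := seq_min_mem b hi.
exists l, h; split.
- exact: l_max (mem_head _ _).
- move: l_in h_in; rewrite !inE.
  case/predU1P=> [-> | /mapP[u]]; last rewrite mem_filter => /andP[ux uL] ->;
  case/predU1P=> [-> | /mapP[v]]; try (rewrite mem_filter => /andP[xv vL] ->).
  + by case: hom.
  + by case: (inL v vL) => _ /andP[].
  + by case: (inL u uL) => _ /andP[].
  + by rewrite -(monoL u v uL vL); lra.
- exact: h_min (mem_head _ _).
- move=> v vL; split=> [vx | xv].
    by apply: l_max; rewrite inE map_f ?orbT // mem_filter vx.
  by apply: h_min; rewrite inE map_f ?orbT // mem_filter xv.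
Qed.

Lemma partial_iso_forth L x : partial_iso L -> a < x < b ->
  exists y, partial_iso ((x, y) :: L).
Proof.
move=> pL xab; have [inL monoL] := pL.
have [/mapP[u uL ->]|xL] := boolP (x \in map fst L).
  exists u.2; have sub : {subset u :: L <= L} by move=> v /predU1P[-> |].
  rewrite -surjective_pairing.
  by split=> [v /sub /inL | v w /sub vL /sub /(monoL _ _ vL)].
have [l [h [al lh hb sep]]] := partial_iso_gap pL xab.
have [y /andP[ly yh] ey] := hom.2 x xab l h al lh hb.
have cmp v : v \in L -> (x < v.1) = (y < v.2) /\ (v.1 < x) = (v.2 < y).
  move=> vL; have [lo_v hi_v] := sep v vL.
  have [xv|vx|ev] := ltgtP x v.1.
  - by have := hi_v xv; split; apply/esym; [|apply/negbTE; rewrite -leNgt]; lra.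
  - by have := lo_v vx; split; apply/esym; [apply/negbTE; rewrite -leNgt|]; lra.
  - by case/negP: xL; rewrite ev map_f.
exists y; split=> [u|u v]; rewrite ?inE.
  by case/predU1P=> [-> /= | /inL //]; split; rewrite ?ey //; apply/andP; split; lra.
by case/predU1P=> [-> | uL] /predU1P[-> | vL] /=;
  rewrite ?ltxx //; [case: (cmp v vL) | case: (cmp u uL) | exact: monoL].
Qed.

Lemma partial_iso_back L y : partial_iso L -> a < y < b ->
  exists x, partial_iso ((x, y) :: L).
Proof.
move=> /partial_iso_swap pL yab; have [x /partial_iso_swap] := partial_iso_forth pL yab.
by rewrite /= (mapK swap_pairK); exists x.
Qed.

Definition add_dom L x : seq (rat * rat) :=
  if a < x < b then (x, epsilon (inhabits 0) (fun y => partial_iso ((x, y) :: L))) :: L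
  else L.

Definition add_ran L y : seq (rat * rat) :=
  if a < y < b then (epsilon (inhabits 0) (fun x => partial_iso ((x, y) :: L)), y) :: L
  else L.

Lemma partial_iso_add_dom L x : partial_iso L -> partial_iso (add_dom L x).
Proof.
rewrite /add_dom => pL; case: ifP => // xab.
exact: epsilon_spec (partial_iso_forth pL xab).
Qed.

Lemma partial_iso_add_ran L y : partial_iso L -> partial_iso (add_ran L y).
Proof.
rewrite /add_ran => pL; case: ifP => // yab.
exact: epsilon_spec (partial_iso_back pL yab).
Qed.

(* Every rational q is [rat_enum (pickle q)], so step [(pickle q).+1] of [chain]
   puts q into both the domain and the range. *)
Definition rat_enum (n : nat) : rat := odflt 0 (unpickle n).

Variables x0 y0 : rat.
Hypothesis start : partial_iso [:: (x0, y0)].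

Fixpoint chain (n : nat) : seq (rat * rat) :=
  if n is m.+1 then add_ran (add_dom (chain m) (rat_enum m)) (rat_enum m)
  else [:: (x0, y0)].

Lemma partial_iso_chain n : partial_iso (chain n).
Proof.
elim: n => [|n IH] //=.
exact/partial_iso_add_ran/partial_iso_add_dom.
Qed.

Lemma chain_sub m n : (m <= n)%N -> {subset chain m <= chain n}.
Proof.
elim: n => [|n IH]; first by rewrite leqn0 => /eqP ->.
rewrite leq_eqVlt ltnS => /predU1P[-> // | /IH sub u /sub uL] /=.
have {}uL : u \in add_dom (chain n) (rat_enum n).
  by rewrite /add_dom; case: ifP; rewrite ?inE ?uL ?orbT.
by rewrite /add_ran; case: ifP; rewrite ?inE ?uL ?orbT.
Qed.

Lemma chain_dom q : a < q < b -> exists y, (q, y) \in chain (pickle q).+1.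
Proof.
rewrite /= /rat_enum pickleK /= /add_dom => ->.
by eexists; rewrite /add_ran; case: ifP => _; [apply: mem_behead | ]; apply: mem_head.
Qed.

Lemma chain_ran q : a < q < b -> exists x, (x, q) \in chain (pickle q).+1.
Proof. by rewrite /= /rat_enum pickleK /= /add_ran => ->; eexists; apply: mem_head. Qed.

Definition in_chain (u : rat * rat) : Prop := exists n, u \in chain n.

Lemma in_chain_inside u : in_chain u -> [/\ a < u.1 < b, a < u.2 < b & chi u.1 = chi u.2].
Proof. by case=> n; apply: (partial_iso_chain n).1. Qed.

Lemma in_chain_mono u v : in_chain u -> in_chain v -> (u.1 < v.1) = (u.2 < v.2).
Proof.
move=> [m um] [n vn]; apply: (partial_iso_chain (maxn m n)).2.
  exact: chain_sub (leq_maxl m n) _ um.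
exact: chain_sub (leq_maxr m n) _ vn.
Qed.

Lemma in_chain_eq u v : in_chain u -> in_chain v -> (u.1 == v.1) = (u.2 == v.2).
Proof. by move=> cu cv; apply: eq_of_lt_agree; apply: in_chain_mono. Qed.

Definition chain_lim q : rat :=
  if a < q < b then epsilon (inhabits 0) (fun y => in_chain (q, y)) else q.

Lemma chain_limP q : a < q < b -> in_chain (q, chain_lim q).
Proof.
rewrite /chain_lim => qab; rewrite qab.
apply: (epsilon_spec (inhabits 0) (fun y => in_chain (q, y))).
by have [y qy] := chain_dom qab; exists y, (pickle q).+1.
Qed.

Lemma chain_lim_out q : ~~ (a < q < b) -> chain_lim q = q.
Proof. by rewrite /chain_lim => /negbTE ->. Qed.

Lemma lt_inside_outside p q r : a < p < b -> a < q < b -> ~~ (a < r < b) ->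
  (p < r) = (q < r) /\ (r < p) = (r < q).
Proof.
move=> /andP[ap pb] /andP[aq qb]; rewrite negb_and -!leNgt.
by case/orP=> ?; split; apply/idP/idP; lra.
Qed.

Lemma homogeneous_colour_aut : colour_aut chi chain_lim /\ chain_lim x0 = y0.
Proof.
have inside q : a < q < b -> a < chain_lim q < b.
  by move=> /chain_limP /in_chain_inside[].
split; first split.
- move=> q r.
  have [qab|qab] := boolP (a < q < b); have [rab|rab] := boolP (a < r < b).
  + by rewrite (in_chain_mono (chain_limP qab) (chain_limP rab)).
  + by rewrite (chain_lim_out rab); case: (lt_inside_outside (inside q qab) qab rab).
  + by rewrite (chain_lim_out qab); case: (lt_inside_outside (inside r rab) rab qab).
  + by rewrite !chain_lim_out.
- move=> y; have [yab|yab] := boolP (a < y < b); last by exists y; rewrite chain_lim_out.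
  have [x xy] := chain_ran yab.
  have xyc : in_chain (x, y) by exists (pickle y).+1.
  have [xab _ _] := in_chain_inside xyc.
  by exists x; apply/eqP; rewrite -(in_chain_eq (chain_limP xab) xyc) eqxx.
- move=> q; have [qab|qab] := boolP (a < q < b); last by rewrite chain_lim_out.
  by have [_ _ ->] := in_chain_inside (chain_limP qab).
have [x0ab _ _] := start.1 _ (mem_head _ _).
have x0c : in_chain (x0, y0) by exists 0%N; apply: mem_head.
by apply/eqP; rewrite -(in_chain_eq (chain_limP x0ab) x0c) eqxx.
Qed.

End BackAndForth.

Lemma exists_nontrivial_colour_aut (K : finType) (chi : rat -> K) :
  exists2 f, colour_aut chi f & exists q, f q != q.
Proof.
have [a [b hom]] := exists_homogeneous chi.
pose x0 := (a + b) / 2.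
have [ax0 x0b] : a < x0 /\ x0 < b by case: hom => ab _; rewrite /x0; split; lra.
have x0ab : a < x0 < b by rewrite ax0 x0b.
have [y0 /andP[x0y0 y0b] ey0] := hom.2 x0 x0ab x0 b (ltW ax0) x0b (lexx b).
have start : partial_iso chi a b [:: (x0, y0)].
  split=> [u | u v]; rewrite ?mem_seq1; last by move=> /eqP -> /eqP ->; rewrite !ltxx.
  by move=> /eqP ->; split; rewrite //= ?ey0 //; apply/andP; split; lra.
have [fA fx0] := homogeneous_colour_aut hom start.
by exists (chain_lim chi a b x0 y0) => //; exists x0; rewrite fx0 gt_eqF.
Qed.

Definition lift_vtx (f : rat -> rat) (v : vtx) : vtx :=
  match v with inl q => plus (f q) | inr r => minus (f r) end.

Lemma lift_vtx_autG (f : rat -> rat) :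
  {mono f : q r / q < r} -> (forall r, exists q, f q = r) -> is_autG (lift_vtx f).
Proof.
move=> fmono fsurj.
have finj : injective f.
  by apply: (mono_inj lexx le_anti); apply: le_mono => q r; rewrite fmono.
have fsurjb r : exists q, f q == r by have [q <-] := fsurj r; exists q.
pose g r := xchoose (fsurjb r).
have gK : cancel g f by move=> r; exact/eqP/(xchooseP (fsurjb r)).
split; last by case=> q [] r /=; rewrite ?fmono.
exists (lift_vtx g) => [[] q | [] r] /=; rewrite ?gK //;
  by congr (_ _); apply: finj; rewrite gK.
Qed.

Theorem mainTheorem4 (C : finType) (c : vtx -> C) : ~ distinguishing c.
Proof.
move=> D.
have [f [fmono fsurj fcol] [q fq]] :=
  exists_nontrivial_colour_aut (fun r => (c (plus r), c (minus r))).
have colour v : c (lift_vtx f v) = c v by case: v => r; have [] := fcol r.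
case: (D _ (lift_vtx_autG fmono fsurj) colour (plus q)) => fqq.
by rewrite fqq eqxx in fq.
Qed.
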